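(* Fix an integer $n\ge 2$, and assume that for every choice of positive integers $v_1,\ldots,v_n$ one has either $\mathrm{ML}(v_1,\ldots,v_n)=\frac{s}{ns+1}$ for some $s\in\mathbb{N}$ or $\mathrm{ML}(v_1,\ldots,v_n)\ge \frac1n$. Then for all positive integers $w_1,\ldots,w_{n-1}$ one has $\mathrm{ML}(w_1,\ldots,w_{n-1})\ge \frac1n$.
   Context: For a real number $x$, $\Vert x\Vert$ denotes the distance from $x$ to the nearest integer. For positive integers $v_1,\ldots,v_k$, the maximum loneliness is $\mathrm{ML}(v_1,\ldots,v_k)=\max_{t\in\mathbb{R}}\min_{1\le i\le k}\Vert t v_i\Vert$. Here $\mathbb{N}=\{1,2,3,\ldots\}$. *)

From HB Require Import structures.
From mathcomp Require Import all_boot all_order all_algebra.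
From mathcomp Require Import all_classical all_reals.
Set Implicit Arguments. Unset Strict Implicit. Unset Printing Implicit Defensive.
Import Order.TTheory GRing.Theory Num.Theory.
Local Open Scope ring_scope.
Local Open Scope classical_set_scope.

Definition dist_int {R : realType} (x : R) : R :=
  Num.min (x - (Num.floor x)%:~R) ((Num.ceil x)%:~R - x).

(* min_{1<=i<=k} ||t v_i||; the neutral element 1 is irrelevant for k >= 1
   since every ||.|| is at most 1/2. *)
Definition loneliness {R : realType} (k : nat) (v : 'I_k -> nat) (t : R) : R :=
  \big[Num.min/1]_(i < k) dist_int (t * (v i)%:R).

(* ML(v_1,...,v_k) = max_t min_i ||t v_i||, written as the supremum of the
   (bounded, attained) set of values. *)
Definition ML {R : realType} (k : nat) (v : 'I_k -> nat) : R :=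
  sup [set m : R | exists t : R, m = loneliness v t].

(* Suppose d := ML(w) < 1/n.  Repeating a speed of w does not change the
   loneliness, so the hypothesis forces d = s0/(n s0 + 1).  Now append a huge
   speed N divisible by (n s0 + 1) w_i for every i.  Where the old speeds reach
   loneliness d, some t w_i is at distance d = s0/(n s0 + 1) from an integer, so
   t N is an integer and the new speed is not lonely: ML(w, N) < d.  On the other
   hand, moving t by at most 1/(2N) makes t N a half-integer, so ML(w, N) is as
   close to d as we like.  But below d the values s/(n s + 1) stay at distance
   at least 1/(n s0 + 1)^2 from d, and ML(w, N) < d < 1/n: a contradiction. *)
From HB Require Import structures.
From mathcomp Require Import all_boot all_order all_algebra.
From mathcomp Require Import all_classical all_reals.
From mathcomp Require Import all_analysis.
From mathcomp Require Import ring lra.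
Import Order.TTheory GRing.Theory Num.Theory.
Import numFieldNormedType.Exports.
Local Open Scope ring_scope.

Section Loneliness.
Context {R : realType}.
Implicit Types x y t : R.

Lemma dist_int_le x (z : int) : dist_int x <= `|x - z%:~R|.
Proof.
rewrite /dist_int.
have := floor_le x; have := ceil_ge x.
have hcf : Num.ceil x <= Num.floor x + 1.
  by rewrite ceil_le_int; case/andP: (floor_itv x) => _ /ltW.
have [hz|hz] := leP z (Num.floor x).
- have : z%:~R <= (Num.floor x)%:~R :> R by rewrite ler_int.
  move=> ? ? ?; rewrite ger0_norm; last by lra.
  by rewrite ge_min; apply/orP; left; lra.
- have : (Num.ceil x)%:~R <= z%:~R :> R.
    by rewrite ler_int; apply: (le_trans hcf); rewrite lezD1.
  move=> ? ? ?; rewrite ler0_norm; last by lra.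
  by rewrite ge_min; apply/orP; right; lra.
Qed.

Lemma dist_int_attained x : exists z : int, dist_int x = `|x - z%:~R|.
Proof.
rewrite /dist_int; have := floor_le x; have := ceil_ge x.
have [h|h] := leP (x - (Num.floor x)%:~R) ((Num.ceil x)%:~R - x) => ? ?.
- by exists (Num.floor x); rewrite ger0_norm //; lra.
- by exists (Num.ceil x); rewrite ler0_norm //; lra.
Qed.

Lemma dist_int_ge0 x : 0 <= dist_int x.
Proof. by have [z ->] := dist_int_attained x. Qed.

Lemma dist_int_le_half x : dist_int x <= 2^-1.
Proof.
have := dist_int_le x (Num.floor x); have := dist_int_le x (Num.floor x + 1).
case/andP: (floor_itv x); rewrite !intrD !mulr1z => ? ?.
by rewrite ler0_norm ?ger0_norm; lra.
Qed.

Lemma dist_int_lipschitz x y : `|dist_int x - dist_int y| <= `|x - y|.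
Proof.
suff le_xy (a b : R) : dist_int a <= dist_int b + `|a - b|.
  have := le_xy x y; have := le_xy y x; rewrite distrC => ? ?.
  by rewrite ler_norml; apply/andP; split; lra.
have [z ->] := dist_int_attained b.
apply: le_trans (dist_int_le a z) _.
have := ler_normD (a - b) (b - z%:~R).
by rewrite addrA subrK [X in _ <= X]addrC.
Qed.

Lemma dist_intDz x (z : int) : dist_int (x + z%:~R) = dist_int x.
Proof.
apply/eqP; rewrite eq_le; apply/andP; split.
- have [z0 ->] := dist_int_attained x.
  apply: le_trans (dist_int_le _ (z0 + z)) _.
  by rewrite intrD opprD addrACA subrr addr0.
- have [z0 ->] := dist_int_attained (x + z%:~R).
  apply: le_trans (dist_int_le _ (z0 - z)) _.
  by rewrite intrB opprB addrA.
Qed.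

Lemma dist_int_intr (z : int) : dist_int (z%:~R : R) = 0.
Proof.
apply/eqP; rewrite eq_le dist_int_ge0 andbT.
by apply: le_trans (dist_int_le _ z) _; rewrite subrr normr0.
Qed.

Lemma dist_int_half (z : int) : dist_int (z%:~R + 2^-1 : R) = 2^-1.
Proof.
apply/eqP; rewrite eq_le dist_int_le_half /=.
have [z0 ->] := dist_int_attained (z%:~R + 2^-1).
have -> : z%:~R + 2^-1 - z0%:~R = (z - z0)%:~R + 2^-1 :> R by rewrite intrB; lra.
have [h|h] := leP 0 (z - z0).
- have : 0 <= (z - z0)%:~R :> R by rewrite ler0z.
  by move=> ?; rewrite ger0_norm; lra.
- have : (z - z0 + 1)%:~R <= 0 :> R by rewrite lerz0 lezD1.
  by rewrite intrD => ?; rewrite ler0_norm; lra.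
Qed.

Lemma dist_int_eq x :
  exists z : int, x = z%:~R + dist_int x \/ x = z%:~R - dist_int x.
Proof.
have [z ->] := dist_int_attained x; exists z.
have [h|h] := leP 0 (x - z%:~R).
- by left; rewrite ger0_norm // addrC subrK.
- by right; rewrite ltr0_norm // opprK addrC subrK.
Qed.

Lemma dist_int_mul_nat x (K a : nat) :
  dist_int x * K%:R = a%:R -> exists z : int, x * K%:R = z%:~R.
Proof.
move=> eKa; have [z [->|->]] := dist_int_eq x.
- by exists (z * K%:Z + a%:Z); rewrite mulrDl eKa intrD intrM.
- by exists (z * K%:Z - a%:Z); rewrite mulrBl eKa intrB intrM.
Qed.

Lemma lipschitz_continuous (f : R -> R) (C : R) :
  (forall x y, `|f x - f y| <= C * `|x - y|) -> continuous f.
Proof.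
move=> fC x; apply/(@cvgrPdist_lt _ _ _ (nbhs x)) => e e0.
have C1 : 0 < `|C| + 1 by rewrite ltr_wpDl.
near=> z.
apply: le_lt_trans (fC _ _) _.
apply: le_lt_trans (_ : (`|C| + 1) * `|x - z| < e).
  by rewrite ler_wpM2r // (le_trans (ler_norm C)) // lerDl.
rewrite -ltr_pdivlMl //; near: z.
by apply: cvgr_dist_lt => //; rewrite mulr_gt0 ?invr_gt0.
Unshelve. all: by end_near.
Qed.

Section Speeds.
Context {k : nat}.
Implicit Types v w : 'I_k -> nat.

Lemma loneliness_le1 v t : loneliness v t <= 1.
Proof. exact: bigmin_le_id. Qed.

Lemma loneliness_le v t i : loneliness v t <= dist_int (t * (v i)%:R).
Proof. exact: bigmin_le. Qed.

Lemma loneliness_lipschitz v t t' :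
  `|loneliness v t - loneliness v t'| <= (\sum_i v i)%N%:R * `|t - t'|.
Proof.
suff one_side (s s' : R) : loneliness v s - (\sum_i v i)%N%:R * `|s - s'| <= loneliness v s'.
  have := one_side t t'; have := one_side t' t; rewrite distrC => ? ?.
  by rewrite ler_norml; apply/andP; split; lra.
apply: le_bigmin => [|i _].
  by rewrite lerBlDr (le_trans (loneliness_le1 v s)) // lerDl mulr_ge0.
have := loneliness_le v s i.
have := dist_int_lipschitz (s * (v i)%:R) (s' * (v i)%:R).
have : `|s * (v i)%:R - s' * (v i)%:R| <= (\sum_i v i)%N%:R * `|s - s'|.
  rewrite -mulrBl normrM mulrC ler_wpM2r // normr_nat ler_nat.
  by rewrite (bigD1 i) //= leq_addr.
move=> ? /(le_trans (ler_norm _)) ? ?; lra.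
Qed.

Lemma loneliness_periodic v t (z : int) : loneliness v (t + z%:~R) = loneliness v t.
Proof.
apply: eq_bigr => i _.
by rewrite mulrDl !pmulrn -intrM dist_intDz.
Qed.

Local Open Scope classical_set_scope.

Let lonely_values v := [set m : R | exists t, m = loneliness v t].

Lemma lonely_values_ubound v : has_ubound (lonely_values v).
Proof. by exists 1 => _ [t ->]; exact: loneliness_le1. Qed.

Lemma lonely_values_nonempty v : lonely_values v !=set0.
Proof. by exists (loneliness v 0), 0. Qed.

Lemma loneliness_le_ML v t : loneliness v t <= ML v.
Proof. by apply: ub_le_sup; [exact: lonely_values_ubound | exists t]. Qed.

Lemma ML_le v b : (forall t, loneliness v t <= b) -> ML v <= b.
Proof. by move=> vb; apply: ge_sup; [exact: lonely_values_nonempty | move=> _ [t ->]]. Qed.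

Lemma ML_approx v e : 0 < e -> exists t, ML v - e < loneliness v t.
Proof.
move=> e0; have [_ [t ->] ?] :=
  sup_adherent e0 (conj (lonely_values_nonempty v) (lonely_values_ubound v)).
by exists t.
Qed.

(* By periodicity the supremum is a maximum over the compact [0, 1]. *)
Lemma ML_attained v : exists t, ML v = loneliness v t.
Proof.
have cont : {within `[0, 1], continuous (@loneliness R k v)}.
  by apply: continuous_subspaceT; apply: lipschitz_continuous; exact: loneliness_lipschitz.
have [c _ cmax] := EVT_max ler01 cont.
exists c; apply/eqP; rewrite eq_le loneliness_le_ML andbT.
apply: ML_le => t; rewrite -(loneliness_periodic v t (- Num.floor t)).
apply: cmax; rewrite in_itv /= intrN subr_ge0 floor_le /=.
by case/andP: (floor_itv t); rewrite intrD => _ ?; apply: ltW; lra.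
Qed.

End Speeds.

Lemma eq_ML {k k'} (v : 'I_k -> nat) (w : 'I_k' -> nat) :
  (forall t, loneliness v t = loneliness w t) -> ML v = ML w :> R.
Proof. by move=> /funext vw; rewrite /ML vw. Qed.

Lemma loneliness_attained {k} (v : 'I_k.+1 -> nat) t :
  exists i, loneliness v t = dist_int (t * (v i)%:R).
Proof.
have le1 i : dist_int (t * (v i)%:R) <= 1.
  by apply: le_trans (dist_int_le_half _) _; lra.
by have [i _ e] := @eq_bigmin _ _ _ 1 ord0 xpredT _ isT (fun i _ => le1 i); exists i.
Qed.

Lemma ML_le_half {k} (v : 'I_k.+1 -> nat) : ML v <= 2^-1 :> R.
Proof.
by apply: ML_le => t; apply: le_trans (loneliness_le v t ord0) (dist_int_le_half _).
Qed.

Definition prepend {k} (x : nat) (w : 'I_k -> nat) : 'I_k.+1 -> nat :=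
  fun i => if unlift ord0 i is Some j then w j else x.

Lemma prepend_gt0 {k} {x : nat} {w : 'I_k -> nat} :
  (0 < x)%N -> (forall i, 0 < w i)%N -> forall i, (0 < prepend x w i)%N.
Proof. by move=> x0 w0 i; rewrite /prepend; case: unlift. Qed.

Lemma loneliness_prepend {k} (x : nat) (w : 'I_k -> nat) t :
  loneliness (prepend x w) t = Num.min (dist_int (t * x%:R)) (loneliness w t).
Proof.
rewrite /loneliness big_ord_recl /prepend unlift_none.
by congr Num.min; apply: eq_bigr => i _; rewrite liftK.
Qed.

Lemma ML_prepend_dup {k} (w : 'I_k -> nat) i : ML (prepend (w i) w) = ML w :> R.
Proof.
apply: eq_ML => t; rewrite loneliness_prepend.
by apply/min_idPr; exact: loneliness_le.
Qed.

(* At a maximiser of [w] some [t w_i] is [+-a/K] modulo 1, so [t N] is an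
   integer. *)
Lemma ML_prepend_lt {k} (w : 'I_k.+1 -> nat) (K a N : nat) :
  0 < ML w :> R -> ML w * K%:R = a%:R :> R -> (forall i, K * w i %| N)%N ->
  ML (prepend N w) < ML w :> R.
Proof.
move=> ML_gt0 eKa dvdN.
have [t ->] := ML_attained (prepend N w); rewrite loneliness_prepend gt_min.
have [lt_w|ge_w] := ltP (loneliness w t) (ML w); first by apply/orP; right.
have eLw : loneliness w t = ML w by apply/eqP; rewrite eq_le ge_w loneliness_le_ML.
have [i ei] := loneliness_attained w t.
have /dist_int_mul_nat [z ez] : dist_int (t * (w i)%:R) * K%:R = a%:R.
  by rewrite -ei eLw.
have -> : t * N%:R = t * (w i)%:R * K%:R * (N %/ (K * w i))%:R.
  by rewrite -[in LHS](divnK (dvdN i)) !natrM; ring.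
by rewrite ez pmulrn -intrM dist_int_intr ML_gt0.
Qed.

Lemma dist_int_half_near (N : nat) t0 :
  (0 < N)%N -> exists t, dist_int (t * N%:R) = 2^-1 /\ `|t - t0| * N%:R <= 2^-1.
Proof.
move=> N0; have N0' : 0 < N%:R :> R by rewrite ltr0n.
exists (((Num.floor (t0 * N%:R))%:~R + 2^-1) / N%:R).
rewrite divfK ?gt_eqF // dist_int_half; split=> //.
rewrite -[X in `|_| * X](gtr0_norm N0') -normrM mulrBl divfK ?gt_eqF //.
case/andP: (floor_itv (t0 * N%:R)); rewrite intrD => ? ?.
by rewrite ler_norml; apply/andP; split; lra.
Qed.

Lemma ML_prepend_large {k} (w : 'I_k.+1 -> nat) {e : R} :
  0 < e -> exists M : nat, forall N, (M <= N)%N -> ML w - e < ML (prepend N w) :> R.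
Proof.
move=> e0; have e20 : 0 < e / 2 by rewrite divr_gt0.
have [t0 ht0] := ML_approx w _ e20.
set C : R := (\sum_i w i)%N%:R.
exists (Num.trunc (C / e)).+1 => N MN.
have N0 : 0 < N%:R :> R by rewrite ltr0n (leq_trans _ MN).
have CN : C < e * N%:R.
  have : (Num.trunc (C / e)).+1%:R <= N%:R :> R by rewrite ler_nat.
  have := truncnS_gt (C / e); have : C / e * e = C by rewrite divfK ?gt_eqF.
  nra.
have [t [dtN tt0]] := dist_int_half_near N t0 (leq_trans (ltn0Sn _) MN).
have Ct : C * `|t - t0| <= e / 2.
  have : 0 <= C by [].
  have := normr_ge0 (t - t0); nra.
have := loneliness_lipschitz w t0 t.
rewrite -/C (distrC t0) ler_norml => /andP[_ lip].
have half_w := ML_le_half w; apply: lt_le_trans (loneliness_le_ML (prepend N w) t).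
by rewrite loneliness_prepend dtN lt_min; apply/andP; split; lra.
Qed.

Lemma frac_gap {c : R} {s s0 : nat} : 0 <= c ->
  s%:R / (c * s%:R + 1) < s0%:R / (c * s0%:R + 1) ->
  s%:R / (c * s%:R + 1) + 1 / (c * s0%:R + 1) ^+ 2 <= s0%:R / (c * s0%:R + 1).
Proof.
move=> c0 lt_s.
have pos (r : nat) : 0 < c * r%:R + 1 by rewrite ltr_pwDr // mulr_ge0.
have diff : s0%:R / (c * s0%:R + 1) - s%:R / (c * s%:R + 1) =
            (s0%:R - s%:R) / ((c * s%:R + 1) * (c * s0%:R + 1)).
  by field; rewrite !gt_eqF ?pos.
have s_lt : s%:R + 1 <= s0%:R :> R.
  rewrite natr1 ler_nat ltnNge; apply/negP; rewrite -(ler_nat R) => le_s.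
  move: lt_s; rewrite -subr_gt0 diff; apply/negP; rewrite -leNgt.
  by rewrite pmulr_lle0 ?invr_gt0 ?mulr_gt0 ?pos // subr_le0.
have gap : s0%:R / (c * s0%:R + 1) - 1 / (c * s0%:R + 1) ^+ 2 - s%:R / (c * s%:R + 1) =
           ((s0%:R - s%:R) * (c * s0%:R + 1) - (c * s%:R + 1)) /
           ((c * s%:R + 1) * (c * s0%:R + 1) ^+ 2).
  by field; rewrite !gt_eqF ?pos.
have : 0 <= ((s0%:R - s%:R) * (c * s0%:R + 1) - (c * s%:R + 1)) /
            ((c * s%:R + 1) * (c * s0%:R + 1) ^+ 2).
  apply: divr_ge0; last by rewrite mulr_ge0 ?exprn_ge0 // ltW ?pos.
  have : 0 <= (s0%:R - s%:R - 1) * (c * s0%:R + 1) by apply: mulr_ge0; [lra | exact: ltW].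
  have : 0 <= c * (s0%:R - s%:R) by rewrite mulr_ge0 // subr_ge0; lra.
  lra.
lra.
Qed.

End Loneliness.

Theorem proposition3p3 (R : realType) (n : nat) (hn : (2 <= n)%N) :
  (forall v : 'I_n -> nat, (forall i, (0 < v i)%N) ->
     (exists s : nat, (1 <= s)%N /\
        ML v = (s%:R / (n%:R * s%:R + 1) : R))
     \/ (1 / n%:R : R) <= ML v) ->
  forall w : 'I_n.-1 -> nat, (forall i, (0 < w i)%N) ->
    (1 / n%:R : R) <= ML w.
Proof.
case: n hn => [|[|m]] // _ hyp w w_gt0 /=.
set c : R := m.+2%:R; have c0 : 0 < c by rewrite ltr0n.
rewrite leNgt; apply/negP => lt_w.
have := hyp _ (prepend_gt0 (w_gt0 ord0) w_gt0); rewrite ML_prepend_dup -/c.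
case=> [[s0 [s0_gt0 ew]]|ge_w]; last by have := lt_le_trans lt_w ge_w; rewrite ltxx.
set g : R := 1 / (c * s0%:R + 1) ^+ 2.
have g_gt0 : 0 < g by rewrite divr_gt0 // exprn_gt0 // ltr_pwDr // mulr_ge0 // ltW.
have [M ML_large] := ML_prepend_large w g_gt0.
set K := (m.+2 * s0 + 1)%N; set N := (K * \prod_i w i * M.+1)%N.
have lt_MN : (M < N)%N by rewrite leq_pmull // muln_gt0 /K addn1 prodn_gt0.
have lo := ML_large N (ltnW lt_MN).
have hi : ML (prepend N w) < ML w :> R.
  apply: (ML_prepend_lt w K s0).
  - by rewrite ew divr_gt0 ?ltr0n ?ltr_pwDr ?mulr_ge0.
  - by rewrite ew /K natrD natrM -/c divfK // gt_eqF // ltr_pwDr // mulr_ge0 // ltW.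
  - by move=> i; rewrite /N -mulnA dvdn_mul // dvdn_mulr // (bigD1 i) //= dvdn_mulr.
have := hyp _ (prepend_gt0 (leq_ltn_trans (leq0n M) lt_MN) w_gt0); rewrite -/c.
case=> [[s [_ eN]]|ge_N]; last by have := lt_trans (le_lt_trans ge_N hi) lt_w; rewrite ltxx.
by rewrite eN ew in lo hi; have := frac_gap (ltW c0) hi; rewrite -/g; lra.
Qed.
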